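(* Let $\Lambda$ be a lattice and $B\subset\Lambda$ a finite subset. Then $B$ has an integral decomposition $B=\bigcup_i B_i$ in which every $B_i$ is irreducible, and this decomposition is unique up to the order of the factors.
   Context: A lattice is a free abelian group of finite rank. For a subset $A\subseteq\Lambda$, $\langle A\rangle_{\mathbb Z}$ denotes the subgroup generated by $A$ and $\langle A\rangle_{\mathbb C}$ the complex subspace of $\Lambda\otimes_{\mathbb Z}\mathbb C$ it spans. The completion of a subgroup $\Delta\subseteq\Lambda$ is $\overline{\Delta}=\langle\Delta\rangle_{\mathbb C}\cap\Lambda$. An integral decomposition of a finite set $B\subset\Lambda$ is a partition $B=\bigcup_i B_i$ (into nonempty parts) such that $\overline{\langle B\rangle_{\mathbb Z}}=\bigoplus_i\overline{\langle B_i\rangle_{\mathbb Z}}$ (internal direct sum). $B$ is irreducible if it has no nontrivial integral decomposition. *)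

(* A lattice of rank n is modelled as Z^n = 'rV[int]_n. *)
From mathcomp Require Import all_boot all_order all_algebra all_field.
From mathcomp Require Import finmap.
Set Implicit Arguments. Unset Strict Implicit. Unset Printing Implicit Defensive.
Import Order.TTheory GRing.Theory Num.Theory.
Local Open Scope fset_scope.
Local Open Scope ring_scope.

Definition zgen n (A : {fset 'rV[int]_n}) : 'rV[int]_n -> Prop :=
  fun v => exists c : 'rV[int]_n -> int, v = \sum_(a <- A) c a *: a.

(* embedding Lambda -> Lambda (x) C, with C modelled by algC *)
Definition toC n (v : 'rV[int]_n) : 'rV[algC]_n := map_mx (fun z : int => z%:~R) v.

(* completion of a subgroup D : <D>_C cap Lambda *)
Definition completion n (D : 'rV[int]_n -> Prop) : 'rV[int]_n -> Prop :=
  fun v => exists (s : seq 'rV[int]_n) (c : 'rV[int]_n -> algC),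
    (forall a, a \in s -> D a) /\ toC v = \sum_(a <- s) c a *: toC a.

Definition internal_direct_sum n (I : choiceType) (P : {fset I})
  (D : I -> 'rV[int]_n -> Prop) (G : 'rV[int]_n -> Prop) : Prop :=
  (forall v, G v <-> exists f : I -> 'rV[int]_n,
      (forall X, X \in P -> D X (f X)) /\ v = \sum_(X <- P) f X) /\
  (forall f g : I -> 'rV[int]_n,
      (forall X, X \in P -> D X (f X)) -> (forall X, X \in P -> D X (g X)) ->
      \sum_(X <- P) f X = \sum_(X <- P) g X -> forall X, X \in P -> f X = g X).

Definition is_partition n (B : {fset 'rV[int]_n}) (P : {fset {fset 'rV[int]_n}}) : Prop :=
  (forall X, X \in P -> X != fset0) /\
  (forall X Y, X \in P -> Y \in P -> X != Y -> [disjoint X & Y]) /\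
  (forall x, x \in B <-> exists2 X, X \in P & x \in X).

Definition integral_decomposition n (B : {fset 'rV[int]_n})
  (P : {fset {fset 'rV[int]_n}}) : Prop :=
  is_partition B P /\
  internal_direct_sum P (fun X => completion (zgen X)) (completion (zgen B)).

Definition irreducible_set n (B : {fset 'rV[int]_n}) : Prop :=
  forall P, integral_decomposition B P -> (#|` P| <= 1)%N.

(* A lattice vector lies in the completion of <X>_Z iff it is a rational
   combination of X: coefficients over algC can be replaced by rational ones,
   since membership of a rational vector in a rational row space does not
   depend on the field.  Hence a partition P of B is an integral decomposition
   iff it splits integrally: whenever a rational combination of B is a lattice
   vector, so is its part supported on each block of P.  This criterion passes
   to the trace of P on any subset of B, so an irreducible subset of B lies in
   a single block of every integral decomposition; applied in both directions,
   two decompositions into irreducible blocks coincide.  For existence, replace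
   a reducible block by one of its nontrivial decompositions: the number of
   blocks grows, and it is bounded by the number of subsets of B. *)

From mathcomp Require Import all_boot all_order all_algebra all_field.
From mathcomp Require Import finmap.
From mathcomp Require Import zify ring.
From Stdlib Require Import ClassicalEpsilon.
Set Implicit Arguments. Unset Strict Implicit. Unset Printing Implicit Defensive.
Import Order.TTheory GRing.Theory Num.Theory.

Local Open Scope fset_scope.
Local Open Scope ring_scope.

Section IntegralDecomposition.
Variable n : nat.
Local Notation V := 'rV[int]_n.
Local Notation ratv := (map_mx (intmul (1 : rat)) : V -> 'rV[rat]_n).

Lemma ratv_inj : injective ratv.
Proof.
move=> u v /matrixP uv; apply/matrixP => i j.
by apply: (@intr_inj rat); have := uv i j; rewrite !mxE.
Qed.

Lemma numq_ratv (v : V) : map_mx numq (ratv v) = v.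
Proof. by apply/matrixP => i j; rewrite !mxE numq_int. Qed.

Lemma toC_ratv (v : V) : toC v = map_mx ratr (ratv v).
Proof. by apply/matrixP => i j; rewrite !mxE ratr_int. Qed.

Definition rcomb (s : seq V) (c : V -> rat) : 'rV[rat]_n :=
  \sum_(a <- s) c a *: ratv a.

Lemma ratv_zcomb (s : seq V) (z : V -> int) :
  ratv (\sum_(a <- s) z a *: a) = rcomb s (fun a => (z a)%:~R).
Proof. by rewrite map_mx_sum; apply: eq_bigr => a _; rewrite map_mxZ. Qed.

Lemma eq_rcomb (s : seq V) (c d : V -> rat) : {in s, c =1 d} -> rcomb s c = rcomb s d.
Proof. by move=> cd; apply: eq_big_seq => a /cd ->. Qed.

Lemma rcombD (s : seq V) (c d : V -> rat) :
  rcomb s (fun a => c a + d a) = rcomb s c + rcomb s d.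
Proof. by rewrite /rcomb -big_split; apply: eq_bigr => a _; rewrite scalerDl. Qed.

Lemma rcombB (s : seq V) (c d : V -> rat) :
  rcomb s (fun a => c a - d a) = rcomb s c - rcomb s d.
Proof. by rewrite /rcomb -sumrB; apply: eq_bigr => a _; rewrite scalerBl. Qed.

Lemma rcombZ (s : seq V) (t : rat) (c : V -> rat) :
  rcomb s (fun a => t * c a) = t *: rcomb s c.
Proof. by rewrite /rcomb scaler_sumr; apply: eq_bigr => a _; rewrite scalerA. Qed.

Definition restrict (X : {fset V}) (c : V -> rat) (a : V) : rat :=
  if a \in X then c a else 0.

Lemma rcomb_restrict (X B : {fset V}) (c : V -> rat) :
  X `<=` B -> rcomb X c = rcomb B (restrict X c).
Proof.
move=> XB; rewrite (@eq_rcomb _ _ (restrict X c)) => [|a aX]; last first.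
  by rewrite /restrict aX.
by apply: big_fset_incl => // a _ /negbTE aX; rewrite /restrict aX scale0r.
Qed.

Lemma ratv_algC_comb (s : seq V) (v : V) (e : V -> algC) : uniq s ->
  toC v = \sum_(a <- s) e a *: toC a -> exists d, ratv v = rcomb s d.
Proof.
move=> s_uniq ve.
pose M := \matrix_(i < size s) ratv s`_i.
have : (map_mx ratr (ratv v) <= map_mx (ratr : rat -> algC) M)%MS.
  rewrite -toC_ratv ve (big_nth 0) big_mkord.
  have -> : \sum_(i < size s) e s`_i *: toC s`_i =
            \row_(i < size s) e s`_i *m map_mx ratr M.
    rewrite mulmx_sum_row; apply: eq_bigr => i _.
    rewrite mxE; congr (_ *: _); apply/matrixP => k j.
    by rewrite !mxE ord1 ratr_int.
  exact: submxMl.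
rewrite map_submx => /submxP [D ->].
exists (fun a => nth 0 [seq D 0 i | i <- enum 'I_(size s)] (index a s)).
rewrite mulmx_sum_row /rcomb (big_nth 0) big_mkord; apply: eq_bigr => i _.
by rewrite index_uniq // (nth_map i) ?size_enum_ord // nth_ord_enum rowK; congr (_ *: _).
Qed.

Lemma sub_completion (D : V -> Prop) v : D v -> completion D v.
Proof.
move=> Dv; exists [:: v], (fun=> 1); split; last by rewrite big_seq1 scale1r.
by move=> a; rewrite inE => /eqP ->.
Qed.

Lemma zgen_mem (X : {fset V}) a : a \in X -> zgen X a.
Proof.
move=> aX; exists (fun x => (x == a)%:R).
rewrite (big_fsetD1 _ aX) /= eqxx scale1r big1_fset ?addr0 // => x.
by rewrite in_fsetD1 => /andP [/negbTE -> _] _; rewrite scale0r.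
Qed.

Lemma completion_zgenP (X : {fset V}) v :
  completion (zgen X) v <-> exists c, ratv v = rcomb X c.
Proof.
split => [[s [c [sX ve]]]|[c vc]]; last first.
  exists X, (ratr \o c); split; first exact: zgen_mem.
  rewrite toC_ratv vc /rcomb map_mx_sum; apply: eq_bigr => a _.
  by rewrite map_mxZ toC_ratv.
have [e se] : exists e : V -> algC,
    \sum_(a <- s) c a *: toC a = \sum_(x <- X) e x *: toC x.
  elim: s sX {ve} => [|a s IH] sX.
    by exists (fun=> 0); rewrite big_nil big1 // => x _; rewrite scale0r.
  have [|e se] := IH; first by move=> b bs; apply: sX; rewrite inE bs orbT.
  have [z az] := sX a (mem_head _ _).
  exists (fun x => c a * (z x)%:~R + e x).
  rewrite big_cons se [in toC a]az /toC map_mx_sum scaler_sumr -big_split /=.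
  by apply: eq_bigr => x _; rewrite map_mxZ scalerA scalerDl.
by apply: (ratv_algC_comb (e := e) (fset_uniq X)); rewrite ve se.
Qed.

Lemma completion_zgen0 (X : {fset V}) : completion (zgen X) 0.
Proof.
by apply: sub_completion; exists (fun=> 0); rewrite big1 // => a _; rewrite scale0r.
Qed.

Lemma completion_zgenD (X : {fset V}) u v :
  completion (zgen X) u -> completion (zgen X) v -> completion (zgen X) (u + v).
Proof.
move=> /completion_zgenP [c uc] /completion_zgenP [d vd]; apply/completion_zgenP.
by exists (fun a => c a + d a); rewrite map_mxD uc vd rcombD.
Qed.

Lemma completion_zgenB (X : {fset V}) u v :
  completion (zgen X) u -> completion (zgen X) v -> completion (zgen X) (u - v).
Proof.
move=> /completion_zgenP [c uc] /completion_zgenP [d vd]; apply/completion_zgenP.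
by exists (fun a => c a - d a); rewrite map_mxB uc vd rcombB.
Qed.

Lemma completion_zgenZ (X : {fset V}) (m : int) v :
  completion (zgen X) v -> completion (zgen X) (m *: v).
Proof.
move=> /completion_zgenP [c vc]; apply/completion_zgenP.
by exists (fun a => m%:~R * c a); rewrite map_mxZ vc rcombZ.
Qed.

Lemma completion_zgenS (X Y : {fset V}) v : X `<=` Y ->
  completion (zgen X) v -> completion (zgen Y) v.
Proof.
move=> XY /completion_zgenP [c vc]; apply/completion_zgenP.
by exists (restrict X c); rewrite vc (rcomb_restrict c XY).
Qed.

Lemma partition_fsubset (B : {fset V}) (P : {fset {fset V}}) (X : {fset V}) :
  is_partition B P -> X \in P -> X `<=` B.
Proof. by move=> [_ [_ BP]] XP; apply/fsubsetP => x xX; apply/BP; exists X. Qed.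

Lemma rcomb_partition (B : {fset V}) (P : {fset {fset V}}) (c : V -> rat) :
  is_partition B P -> rcomb B c = \sum_(X <- P) rcomb X c.
Proof.
move=> [_ [disjP BP]]; have -> : B = fcover P.
  apply/fsetP => x; apply/idP/bigfcupP => [/BP [X XP xX]|[X /andP [XP _] xX]].
    by exists X; rewrite ?XP.
  by apply/BP; exists X.
by apply: big_trivIfset; apply/trivIfsetP => X Y XP YP; apply: disjP.
Qed.

Definition glue (P : {fset {fset V}}) (d : {fset V} -> V -> rat) (a : V) : rat :=
  \sum_(Y <- P) restrict Y (d Y) a.

Lemma glue_part (B : {fset V}) (P : {fset {fset V}})
    (d : {fset V} -> V -> rat) (X : {fset V}) :
  is_partition B P -> X \in P -> {in X, glue P d =1 d X}.
Proof.
move=> [_ [disjP _]] XP a aX; rewrite /glue (big_fsetD1 _ XP) /= /restrict aX.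
rewrite big1_fset ?addr0 // => Y; rewrite in_fsetD1 => /andP [YX YP] _.
case: ifP => // aY; have /fdisjointP/(_ a aY) := disjP Y X YP XP YX.
by rewrite aX.
Qed.

Definition splits_integrally (B : {fset V}) (P : {fset {fset V}}) :=
  forall c v, ratv v = rcomb B c ->
  forall X, X \in P -> exists w, ratv w = rcomb X c.

Lemma splits_integrally_kernel (B : {fset V}) (P : {fset {fset V}})
    (c : V -> rat) (X : {fset V}) :
  splits_integrally B P -> rcomb B c = 0 -> X \in P -> rcomb X c = 0.
Proof.
move=> splitBP Bc0 XP; apply/matrixP => i j; rewrite mxE.
apply/eqP; apply: contraT => Xc_ij.
(* Rescaling [c] makes the (i, j) entry of [rcomb X c] equal to 1/2. *)
have [|w] := splitBP (fun a => (2 * rcomb X c i j)^-1 * c a) 0 _ X XP.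
  by rewrite rcombZ Bc0 scaler0 map_mx0.
move/matrixP/(_ i j); rewrite rcombZ !mxE invfM -mulrA mulVf // mulr1 => half_w.
have : ((2 * w i j)%:~R : rat) = 1%:~R by rewrite intrM half_w mulfV.
by move/intr_inj; lia.
Qed.

Lemma clear_denominators (B : {fset V}) (c : V -> rat) :
  exists2 m : int, m != 0 &
  exists z : V -> int, forall b, b \in B -> (z b)%:~R = m%:~R * c b.
Proof.
exists (\prod_(b <- B) denq (c b)).
  by rewrite prodf_seq_neq0; apply/allP => b _; apply: denq_neq0.
exists (fun b => numq (c b) * \prod_(b' <- B | b' != b) denq (c b')) => b bB.
by rewrite (bigD1_seq b) //= !intrM numqE; ring.
Qed.

Lemma integral_decomposition_splits (B : {fset V}) (P : {fset {fset V}}) :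
  integral_decomposition B P -> splits_integrally B P.
Proof.
move=> [partBP [spanB uniqB]] c v vc X XP.
have [m m_neq0 [z zc]] := clear_denominators B c.
have [f [fP vf]] := (spanB v).1 (proj2 (completion_zgenP B v) (ex_intro _ c vc)).
pose g Y := \sum_(a <- Y) z a *: a.
have ratv_g Y : Y \in P -> ratv (g Y) = m%:~R *: rcomb Y c.
  move=> YP; rewrite ratv_zcomb -rcombZ; apply: eq_rcomb => a aY.
  exact/zc/(fsubsetP (partition_fsubset partBP YP)).
have gP Y : Y \in P -> completion (zgen Y) (g Y).
  by move=> _; apply: sub_completion; exists z.
have mfP Y : Y \in P -> completion (zgen Y) (m *: f Y).
  by move=> YP; apply/completion_zgenZ/fP.
have sum_g : \sum_(Y <- P) g Y = \sum_(Y <- P) m *: f Y.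
  apply: ratv_inj; rewrite -scaler_sumr -vf map_mxZ vc (rcomb_partition _ partBP).
  by rewrite scaler_sumr map_mx_sum !big_seq; apply: eq_bigr => Y /ratv_g.
exists (f X); apply: (scalerI (_ : m%:~R != 0 :> rat)); first by rewrite intr_eq0.
by rewrite -map_mxZ -(uniqB _ _ gP mfP sum_g X XP) ratv_g.
Qed.

Section SplitsIntegrally.
Variables (B : {fset V}) (P : {fset {fset V}}).
Hypotheses (partBP : is_partition B P) (splitBP : splits_integrally B P).

Lemma splits_integrally_span v :
  completion (zgen B) v <-> exists f : {fset V} -> V,
    (forall X, X \in P -> completion (zgen X) (f X)) /\ v = \sum_(X <- P) f X.
Proof.
split => [/completion_zgenP [c vc]|[f [fP ->]]]; last first.
  rewrite big_seq; apply: (big_ind (completion (zgen B))) => [||X XP].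
  - exact: completion_zgen0.
  - exact: completion_zgenD.
  - exact: completion_zgenS (partition_fsubset partBP XP) (fP X XP).
exists (fun X => map_mx numq (rcomb X c)); split.
  move=> X XP; have [w wc] := splitBP vc XP.
  by rewrite -wc numq_ratv; apply/completion_zgenP; exists c.
apply: ratv_inj; rewrite vc (rcomb_partition _ partBP) map_mx_sum !big_seq.
by apply: eq_bigr => X XP; have [w <-] := splitBP vc XP; rewrite numq_ratv.
Qed.

Lemma splits_integrally_unique (f g : {fset V} -> V) :
  (forall X, X \in P -> completion (zgen X) (f X)) ->
  (forall X, X \in P -> completion (zgen X) (g X)) ->
  \sum_(X <- P) f X = \sum_(X <- P) g X -> forall X, X \in P -> f X = g X.
Proof.
move=> fP gP fg X XP.
have [d dP] : exists d : {fset V} -> V -> rat,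
    forall Y, Y \in P -> ratv (f Y - g Y) = rcomb Y (d Y).
  apply: (choice (fun Y d => Y \in P -> ratv (f Y - g Y) = rcomb Y d)) => Y.
  have [YP|] := boolP (Y \in P); last by exists (fun=> 0).
  have /completion_zgenP [e fge] := completion_zgenB (fP Y YP) (gP Y YP).
  by exists e.
have dglue Y : Y \in P -> ratv (f Y - g Y) = rcomb Y (glue P d).
  by move=> YP; rewrite dP //; apply/esym/eq_rcomb/(glue_part _ partBP).
have : rcomb X (glue P d) = 0.
  apply: (splits_integrally_kernel splitBP _ XP).
  rewrite (rcomb_partition _ partBP) big_seq -(eq_bigr _ dglue) -big_seq.
  by rewrite -map_mx_sum sumrB fg subrr map_mx0.
by rewrite -dglue // -(map_mx0 (intmul (1 : rat))) => /ratv_inj /subr0_eq.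
Qed.

End SplitsIntegrally.

Lemma integral_decompositionP (B : {fset V}) (P : {fset {fset V}}) :
  integral_decomposition B P <-> is_partition B P /\ splits_integrally B P.
Proof.
split => [dBP|[partBP splitBP]].
  by split; [exact: dBP.1 | exact: integral_decomposition_splits].
split; first exact: partBP.
split; first exact: splits_integrally_span.
move=> f g fP gP fg; exact: (splits_integrally_unique partBP splitBP fP gP fg).
Qed.

Definition trace (X : {fset V}) (Q : {fset {fset V}}) : {fset {fset V}} :=
  [fset X `&` Y | Y in Q & X `&` Y != fset0].

Lemma traceP (X : {fset V}) (Q : {fset {fset V}}) (Z : {fset V}) :
  reflect (exists2 Y, Y \in Q /\ X `&` Y != fset0 & Z = X `&` Y) (Z \in trace X Q).
Proof.
apply: (iffP idP) => [/imfsetP [Y /[!inE] /andP [YQ XY] ->]|[Y [YQ XY] ->]].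
  by exists Y.
by apply/imfsetP; exists Y; rewrite //= inE YQ.
Qed.

Lemma mem_trace (X : {fset V}) (Q : {fset {fset V}}) (Y : {fset V}) (x : V) :
  Y \in Q -> x \in X -> x \in Y -> X `&` Y \in trace X Q.
Proof.
move=> YQ xX xY; apply/traceP; exists Y => //; split => //.
by apply/fset0Pn; exists x; rewrite in_fsetI xX xY.
Qed.

Lemma is_partition_trace (B : {fset V}) (Q : {fset {fset V}}) (X : {fset V}) :
  is_partition B Q -> X `<=` B -> is_partition X (trace X Q).
Proof.
move=> [_ [disjQ BQ]] XB; split; [|split].
- by move=> Z /traceP [Y [_ XY] ->].
- move=> _ _ /traceP [Y1 [Y1Q _] ->] /traceP [Y2 [Y2Q _] ->] XY12.
  have /fdisjointP Y12 : [disjoint Y1 & Y2].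
    by apply: disjQ => //; apply: contraNneq XY12 => ->.
  apply/fdisjointP => a; rewrite !in_fsetI => /andP [_ aY1].
  by rewrite (negbTE (Y12 a aY1)) andbF.
- move=> x; split => [xX|[Z /traceP [Y _ ->]]]; last by rewrite in_fsetI => /andP [].
  have [Y YQ xY] := (BQ x).1 (fsubsetP XB x xX).
  by exists (X `&` Y); [apply: mem_trace xX xY | rewrite in_fsetI xX xY].
Qed.

Lemma integral_decomposition_trace (B : {fset V}) (Q : {fset {fset V}}) (X : {fset V}) :
  integral_decomposition B Q -> X `<=` B -> integral_decomposition X (trace X Q).
Proof.
move=> /integral_decompositionP [partBQ splitBQ] XB.
apply/integral_decompositionP; split; first exact: is_partition_trace partBQ XB.
move=> c v vc _ /traceP [Y [YQ _] ->].
have [|w wc] := splitBQ (restrict X c) v _ Y YQ.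
  by rewrite vc (rcomb_restrict c XB).
exists w; rewrite wc (rcomb_restrict c (fsubsetIr X Y)).
by apply: eq_rcomb => a aY; rewrite /restrict in_fsetI aY andbT.
Qed.

Lemma card_le1_eq (R : {fset {fset V}}) (X Y : {fset V}) :
  (#|` R| <= 1)%N -> X \in R -> Y \in R -> X = Y.
Proof.
move=> R_le1 XR YR; apply/eqP/negPn/negP => XY.
suff: (1 < #|` R|)%N by rewrite ltnNge R_le1.
rewrite (cardfsD1 X) XR add1n ltnS lt0n cardfs_eq0; apply/fset0Pn.
by exists Y; rewrite in_fsetD1 eq_sym XY.
Qed.

Lemma irreducible_fsubset_part (B : {fset V}) (Q : {fset {fset V}}) (X : {fset V}) :
  integral_decomposition B Q -> X `<=` B -> X != fset0 -> irreducible_set X ->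
  exists2 Y, Y \in Q & X `<=` Y.
Proof.
move=> dBQ XB /fset0Pn [x xX] irrX.
have trace_le1 := irrX _ (integral_decomposition_trace dBQ XB).
have [_ [_ BQ]] := dBQ.1.
have [Y YQ xY] := (BQ x).1 (fsubsetP XB x xX).
exists Y => //; apply/fsubsetP => a aX.
have [Y' Y'Q aY'] := (BQ a).1 (fsubsetP XB a aX).
have XY' : a \in X `&` Y' by rewrite in_fsetI aX aY'.
rewrite -(card_le1_eq trace_le1 (mem_trace YQ xX xY) (mem_trace Y'Q aX aY')) in XY'.
by move: XY'; rewrite in_fsetI => /andP [].
Qed.

Lemma partition_part_eq (B : {fset V}) (P : {fset {fset V}}) (X Y : {fset V}) :
  is_partition B P -> X \in P -> Y \in P -> X `<=` Y -> X = Y.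
Proof.
move=> [P_neq0 [disjP _]] XP YP XY; apply/eqP/negPn/negP => X_neqY.
have /fset0Pn [x xX] := P_neq0 X XP.
have /fdisjointP/(_ x xX) := disjP X Y XP YP X_neqY.
by rewrite (fsubsetP XY x xX).
Qed.

Lemma irreducible_parts_sub (B : {fset V}) (P Q : {fset {fset V}}) :
  integral_decomposition B P -> (forall X, X \in P -> irreducible_set X) ->
  integral_decomposition B Q -> (forall X, X \in Q -> irreducible_set X) ->
  {subset P <= Q}.
Proof.
move=> dBP irrP dBQ irrQ X XP.
have [[P_neq0 _] [Q_neq0 _]] := (dBP.1, dBQ.1).
have [Y YQ XY] := irreducible_fsubset_part dBQ
  (partition_fsubset dBP.1 XP) (P_neq0 X XP) (irrP X XP).
have [X' X'P YX'] := irreducible_fsubset_part dBP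
  (partition_fsubset dBQ.1 YQ) (Q_neq0 Y YQ) (irrQ Y YQ).
have XX' := partition_part_eq dBP.1 XP X'P (fsubset_trans XY YX').
suff -> : X = Y by [].
by apply/eqP; rewrite eqEfsubset XY XX'.
Qed.

Lemma is_partition_refine (B X : {fset V}) (P Q : {fset {fset V}}) :
  is_partition B P -> X \in P -> is_partition X Q ->
  is_partition B ((P `\ X) `|` Q).
Proof.
move=> partBP XP partXQ; have [P_neq0 [disjP BP]] := partBP.
have [Q_neq0 [disjQ XQ]] := partXQ.
have QX Y : Y \in Q -> Y `<=` X by apply: partition_fsubset partXQ.
have notX Z a : Z \in P `\ X -> a \in Z -> a \notin X.
  by move=> /fsetD1P [ZX ZP] aZ; have /fdisjointP := disjP Z X ZP XP ZX; apply.
split; [|split].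
- by move=> Z /fsetUP [/fsetD1P [_ /P_neq0]|/Q_neq0].
- move=> Z1 Z2 /fsetUP [Z1P|Z1Q] /fsetUP [Z2P|Z2Q] Z12.
  + by move: Z1P Z2P => /fsetD1P [_ ?] /fsetD1P [_ ?]; apply: disjP.
  + apply/fdisjointP => a aZ1; apply: contra (notX _ _ Z1P aZ1).
    exact: (fsubsetP (QX _ Z2Q)).
  + apply/fdisjointP => a aZ1; apply/negP => aZ2.
    by have := notX _ _ Z2P aZ2; rewrite (fsubsetP (QX _ Z1Q) a aZ1).
  + exact: disjQ.
- move=> x; split => [/BP [Z ZP xZ]|[Z /fsetUP [/fsetD1P [_ ZP]|ZQ] xZ]].
  + have [ZX|ZX] := eqVneq Z X.
      have [Y YQ xY] : exists2 Y, Y \in Q & x \in Y by apply/XQ; rewrite -ZX.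
      by exists Y; rewrite // in_fsetU YQ orbT.
    by exists Z; rewrite // in_fsetU in_fsetD1 ZX ZP.
  + by apply/BP; exists Z.
  + by apply/BP; exists X; last exact: (fsubsetP (QX _ ZQ)).
Qed.

Lemma integral_decomposition_refine (B X : {fset V}) (P Q : {fset {fset V}}) :
  integral_decomposition B P -> X \in P -> integral_decomposition X Q ->
  integral_decomposition B ((P `\ X) `|` Q).
Proof.
move=> /integral_decompositionP [partBP splitBP] XP.
move=> /integral_decompositionP [partXQ splitXQ].
apply/integral_decompositionP; split; first exact: is_partition_refine.
move=> c v vc Z /fsetUP [/fsetD1P [_ ZP]|ZQ]; first exact: splitBP vc Z ZP.
by have [w wc] := splitBP c v vc X XP; apply: splitXQ wc Z ZQ.
Qed.

Lemma card_refine (B X : {fset V}) (P Q : {fset {fset V}}) :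
  is_partition B P -> X \in P -> is_partition X Q ->
  #|` (P `\ X) `|` Q| = (#|` P| - 1 + #|` Q|)%N.
Proof.
move=> [_ [disjP _]] XP [Q_neq0 [_ XQ]].
have PQ0 : (P `\ X) `&` Q = fset0.
  apply/eqP; rewrite fsetI_eq0; apply/fdisjointP => Y /fsetD1P [YX YP].
  apply/negP => YQ; have /fset0Pn [y yY] := Q_neq0 Y YQ.
  have /fdisjointP/(_ y yY) := disjP Y X YP XP YX.
  by rewrite (proj2 (XQ y)) //; exists Y.
have := cardfsUI (P `\ X) Q; rewrite PQ0 cardfs0 addn0 => ->.
by rewrite (cardfsD1 X P) XP add1n subn1.
Qed.

Lemma card_partition (B : {fset V}) (P : {fset {fset V}}) :
  is_partition B P -> (#|` P| <= 2 ^ #|` B|)%N.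
Proof.
move=> partBP; rewrite -card_fpowerset; apply: fsubset_leq_card.
by apply/fsubsetP => X XP; rewrite fpowersetE; apply: partition_fsubset partBP XP.
Qed.

Lemma integral_decomposition_exists (B : {fset V}) :
  exists P, integral_decomposition B P.
Proof.
have [->|[x xB]] := fset_0Vmem B.
  exists fset0; apply/integral_decompositionP; split; last by move=> c v _ X; rewrite inE.
  split; [|split] => [X|X Y|y]; rewrite ?inE //.
  by split => // [[X]]; rewrite inE.
exists [fset B]; apply/integral_decompositionP; split.
  split; [|split].
  - by move=> X /fset1P ->; apply/fset0Pn; exists x.
  - by move=> X Y /fset1P -> /fset1P ->; rewrite eqxx.
  - by move=> y; split => [yB|[X /fset1P ->]] //; exists B; rewrite ?inE.
by move=> c v vc X /fset1P ->; exists v.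
Qed.

Lemma integral_decomposition_reducible (B : {fset V}) (P : {fset {fset V}}) :
  integral_decomposition B P -> ~ (forall X, X \in P -> irreducible_set X) ->
  exists2 P', integral_decomposition B P' & (#|` P| < #|` P'|)%N.
Proof.
move=> dBP /not_all_ex_not [X /(imply_to_and (X \in P)) [XP]].
move=> /not_all_ex_not [Q /(imply_to_and (integral_decomposition X Q)) [dXQ /negP]].
rewrite -ltnNge => Q_gt1.
exists ((P `\ X) `|` Q); first exact: integral_decomposition_refine dBP XP dXQ.
rewrite (card_refine dBP.1 XP dXQ.1).
have : (0 < #|` P|)%N by rewrite (cardfsD1 X P) XP.
lia.
Qed.

Lemma irreducible_decomposition_exists (B : {fset V}) :
  exists P, integral_decomposition B P /\ (forall X, X \in P -> irreducible_set X).
Proof.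
have [P dBP] := integral_decomposition_exists B.
suff /(_ _ P dBP (leqnn _)) : forall k P, integral_decomposition B P ->
    (2 ^ #|` B| - #|` P| <= k)%N ->
    exists P, integral_decomposition B P /\ (forall X, X \in P -> irreducible_set X).
  by [].
elim=> [|k IHk] {}P {}dBP lePk;
  have [irrP|/(integral_decomposition_reducible dBP) [P' dBP' ltPP']] :=
    classic (forall X, X \in P -> irreducible_set X); try by exists P.
  by have := card_partition dBP'.1; lia.
by apply: (IHk P' dBP'); lia.
Qed.

End IntegralDecomposition.

Theorem lemma3p4 (n : nat) (B : {fset 'rV[int]_n}) :
  (exists P : {fset {fset 'rV[int]_n}},
      integral_decomposition B P /\ (forall X, X \in P -> irreducible_set X)) /\
  (forall P Q : {fset {fset 'rV[int]_n}},
      integral_decomposition B P -> (forall X, X \in P -> irreducible_set X) ->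
      integral_decomposition B Q -> (forall X, X \in Q -> irreducible_set X) ->
      P = Q).
Proof.
split; first exact: irreducible_decomposition_exists.
move=> P Q dBP irrP dBQ irrQ; apply/fsetP => X; apply/idP/idP.
  exact: irreducible_parts_sub dBP irrP dBQ irrQ X.
exact: irreducible_parts_sub dBQ irrQ dBP irrP X.
Qed.
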